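(* (a) For integers $n\ge d\ge 2$ with $d\mid dn$ (always true), $\mathrm{diam}(Q_n(d,n))=n+\max\{\lfloor n/2\rfloor,\,2\lceil n/d\rceil-2\}$ (here $n\ge 3$). (b) For integers $d\ge1$, $r\ge3$ with $dr\ge 2$: $\mathrm{diam}(COR(d,r))=(d+1)r$ if $r=3$, and $\mathrm{diam}(COR(d,r))=(d+1)r+\lfloor r/2\rfloor-2$ if $r\ge4$.
   Context: For $m\ge1$, $\mathbb{Z}_2^m=\{0,1\}^m$ with coordinatewise addition mod 2; $e_i$ is the $i$-th standard basis vector, subscripts read modulo $m$; $\sigma^j(b)$ is the vector with $\sigma^j(b)_{i+j}=b_i$ (indices mod $m$). The recursive cube of rings $Q_n(d,r)$ (for $n\ge d$, $dr\equiv0\pmod n$) is the simple graph on $\mathbb{Z}_2^n\times\mathbb{Z}_r$ in which $(a,x)$ is adjacent to $(a+e_{i+dx},x)$ for $1\le i\le d$ and to $(a,x\pm1)$. The cube-of-rings $COR(d,r)$ is the Cayley graph on the group with underlying set $\mathbb{Z}_2^{dr}\times\mathbb{Z}_r$ and multiplication $(a,x)(b,y)=(\sigma^{dy}(a)+b,x+y)$, with connection set $\{(0_{dr},1),(0_{dr},r-1),(e_1,0),\dots,(e_d,0)\}$ ($u\sim v$ iff $u^{-1}v$ is in the connection set). *)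

From HB Require Import structures.
From mathcomp Require Import all_boot.
Set Implicit Arguments. Unset Strict Implicit. Unset Printing Implicit Defensive.

Definition walkb (T : finType) (e : rel T) (k : nat) (x y : T) : bool :=
  [exists p : k.-tuple T, path e x p && (last x p == y)].

(* length of a shortest walk from x to y; a shortest walk (if any) has fewer
   than #|T| edges, so this is the graph distance when y is reachable from x
   (and #|T| otherwise) *)
Definition dist (T : finType) (e : rel T) (x y : T) : nat :=
  find (fun k => walkb e k x y) (iota 0 #|T|).

Definition diam (T : finType) (e : rel T) : nat :=
  \max_(x : T) \max_(y : T) dist e x y.

(** * Z_2^m, 0-based coordinates 0..m-1 (coordinate i+1 of the paper) *)
Definition bvec (m : nat) := {ffun 'I_m -> bool}.
Definition vadd m (a b : bvec m) : bvec m := [ffun i => a i (+) b i].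
Definition vzero m : bvec m := [ffun _ => false].
Definition evec m (k : nat) : bvec m := [ffun i : 'I_m => (i : nat) == k %% m].
Definition vat m (b : bvec m) (k : nat) : bool :=
  [exists i : 'I_m, ((i : nat) == k %% m) && b i].
(* sigma^j(b)_{i+j} = b_i, i.e. sigma^j(b)_i = b_{i-j} (indices mod m) *)
Definition sigma m (j : nat) (b : bvec m) : bvec m :=
  [ffun i : 'I_m => vat b (i + m - j %% m)].

Definition Zadd (r : nat) (x y : 'I_r) : 'I_r :=
  Ordinal (ltn_pmod (x + y) (leq_ltn_trans (leq0n x) (ltn_ord x))).

(** * Recursive cube of rings Q_n(d,r) on Z_2^n x Z_r:
    (a,x) ~ (a + e_{i+dx}, x) for 1 <= i <= d  (0-based index (i-1)+dx mod n),
    (a,x) ~ (a, x +- 1). *)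
Definition Qadj (n d r : nat) : rel (bvec n * 'I_r) := fun u v =>
  ((u.2 == v.2) && [exists k : 'I_d, v.1 == vadd u.1 (evec n (k + d * u.2))])
  || ((u.1 == v.1) &&
      (((v.2 : nat) == (u.2 + 1) %% r) || ((v.2 : nat) == (u.2 + (r - 1)) %% r))).

(** * Cube of rings COR(d,r): Cayley graph on Z_2^{dr} x Z_r with
    (a,x)(b,y) = (sigma^{dy}(a) + b, x + y). *)
Definition CORmul (d r : nat) (u s : bvec (d * r) * 'I_r) : bvec (d * r) * 'I_r :=
  (vadd (sigma (d * s.2) u.1) s.1, Zadd u.2 s.2).

Definition CORconn (d r : nat) (s : bvec (d * r) * 'I_r) : bool :=
  ((s.1 == vzero _) && (((s.2 : nat) == 1) || ((s.2 : nat) == r - 1)))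
  || (((s.2 : nat) == 0) && [exists k : 'I_d, s.1 == evec (d * r) k]).

Definition CORadj (d r : nat) : rel (bvec (d * r) * 'I_r) := fun u v =>
  [exists s, CORconn s && (v == CORmul u s)].

Arguments Qadj : clear implicits.
Arguments CORadj : clear implicits.

From HB Require Import structures.
From mathcomp Require Import all_boot.
From Stdlib Require Import ZArith Lia.
From mathcomp Require Import zify.
Set Implicit Arguments. Unset Strict Implicit. Unset Printing Implicit Defensive.

(* Both graphs are cubes of rings with windows: on Z_2^n x Z_r the edges are the
   ring steps (a, x) ~ (a, x +- 1) and the flips (a, x) ~ (a + e_j, x) for j in
   a window W(x).  For Q_n(d,n) the window of x is {dx, ..., dx + d - 1} mod n;
   COR(d,r) becomes such a graph, whose windows are the d-blocks of Z_2^{dr},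
   under (a, x) |-> (sigma^{-dx} a, -x).
   A walk from (a, x) to (b, y) must flip each coordinate where a and b differ at
   a ring position whose window contains it.  Lifting the ring walk to Z, it thus
   costs at least |a + b| plus the length of an integer path from x to a lift Y
   of y whose range has windows covering those coordinates; conversely, sweeping
   along such a path and flipping on the way realizes this cost.  The windows of
   an integer interval cover all coordinates iff its length is at least c, with
   c = ceil(n/d) - 1 for Q_n(d,n) and c = r - 1 for COR(d,r).  So every distance
   is at most n + excursion c |Y - x| for any lift Y, with equality from (0, x)
   to (1, y) for the best lift, and maximizing over x and y gives the formulas. *)

(** * Walks, distance and diameter *)

Section Walks.
Variables (T : finType) (e : rel T).

Lemma walkb0 x y : walkb e 0 x y = (x == y).
Proof.
apply/existsP/idP => [[p /andP[_ /eqP <-]]|/eqP <-]; first by rewrite tuple0.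
by exists [tuple]; rewrite /= eqxx.
Qed.

Lemma walkbS k x y : walkb e k.+1 x y = [exists z, e x z && walkb e k z y].
Proof.
apply/existsP/existsP => [[p]|[z /andP[ez /existsP[p /andP[pp lp]]]]].
  case: p => [[|z s] //= Hs] /andP[/andP[ez ps] ls].
  have Hs' : size s == k by [].
  by exists z; rewrite ez /=; apply/existsP; exists (Tuple Hs'); rewrite /= ps.
by exists [tuple of z :: p]; rewrite /= ez pp.
Qed.

Lemma walkb1 x y : e x y -> walkb e 1 x y.
Proof. by move=> exy; rewrite walkbS; apply/existsP; exists y; rewrite exy walkb0 /=. Qed.

Lemma walkb_cat k1 k2 x z y :
  walkb e k1 x z -> walkb e k2 z y -> walkb e (k1 + k2) x y.
Proof.
elim: k1 x => [|k IH] x; first by rewrite walkb0 => /eqP ->.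
rewrite walkbS => /existsP[w /andP[ew wk]] wzy.
by rewrite addSn walkbS; apply/existsP; exists w; rewrite ew /= (IH _ wk wzy).
Qed.

Lemma dist_le_walkb k x y : walkb e k x y -> dist e x y <= k.
Proof.
move=> wk; case: (leqP (dist e x y) k) => // lt_k.
have := find_size (fun k => walkb e k x y) (iota 0 #|T|); rewrite size_iota => le_T.
have := before_find 0 lt_k; rewrite nth_iota ?add0n ?wk //.
exact: leq_trans lt_k le_T.
Qed.

Lemma dist_ge D x y :
  D <= #|T| -> (forall k, k < D -> ~~ walkb e k x y) -> D <= dist e x y.
Proof.
move=> DT noW; case: (leqP D (dist e x y)) => // lt_D.
have lt_T : dist e x y < #|T| by exact: leq_trans lt_D DT.
have hasW : has (fun k => walkb e k x y) (iota 0 #|T|) by rewrite has_find size_iota.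
by have := nth_find 0 hasW; rewrite -/(dist e x y) nth_iota // add0n (negPf (noW _ lt_D)).
Qed.

Lemma diam_le D : (forall x y, dist e x y <= D) -> diam e <= D.
Proof. by move=> H; apply/bigmax_leqP => x _; apply/bigmax_leqP => y _. Qed.

Lemma dist_le_diam x y : dist e x y <= diam e.
Proof.
apply: leq_trans (@leq_bigmax _ (fun x => \max_y dist e x y) x).
exact: (@leq_bigmax _ (fun y => dist e x y) y).
Qed.

End Walks.

Lemma walkb_mono (T : finType) (e e' : rel T) (f : T -> T) :
  injective f -> {mono f : u v / e u v >-> e' u v} ->
  forall k u v, walkb e' k (f u) (f v) = walkb e k u v.
Proof.
move=> f_inj f_mono; have [g fK gK] := injF_bij f_inj.
elim=> [|k IH] u v; first by rewrite !walkb0 (eqtype.inj_eq f_inj).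
rewrite !walkbS; apply/existsP/existsP => [[z /andP[ez wz]]|[z /andP[ez wz]]].
  by exists (g z); rewrite -f_mono -IH gK ez.
by exists (f z); rewrite f_mono IH ez.
Qed.

Lemma diam_iso (T : finType) (e e' : rel T) (f : T -> T) :
  injective f -> {mono f : u v / e u v >-> e' u v} -> diam e' = diam e.
Proof.
move=> f_inj f_mono; rewrite /diam (reindex_inj f_inj); apply: eq_bigr => u _.
rewrite (reindex_inj f_inj); apply: eq_bigr => v _.
by apply: eq_find => k; exact: walkb_mono.
Qed.

(** * Integer lifts of ring positions *)
Definition ringpos (r : nat) (p : Z) : nat := Z.to_nat (p mod Z.of_nat r).

Section RingPositions.
Variables (r : nat) (r_gt0 : 0 < r).

Lemma ringpos_lt p : ringpos r p < r.
Proof. by rewrite /ringpos; have := Z.mod_pos_bound p (Z.of_nat r); lia. Qed.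

Lemma ringposP p : exists t, p = (Z.of_nat (ringpos r p) + t * Z.of_nat r)%Z.
Proof.
exists (p / Z.of_nat r)%Z; rewrite /ringpos.
by have := Z.mod_pos_bound p (Z.of_nat r); have := Z.div_mod p (Z.of_nat r); lia.
Qed.

Lemma ringpos_eq p z t :
  z < r -> p = (Z.of_nat z + t * Z.of_nat r)%Z -> ringpos r p = z.
Proof. by move=> zr ->; rewrite /ringpos Z.mod_add ?Z.mod_small; lia. Qed.

Lemma ringpos_small x : x < r -> ringpos r (Z.of_nat x) = x.
Proof. by move=> xr; apply: (@ringpos_eq _ _ 0); lia. Qed.

Lemma ringpos_nat k : ringpos r (Z.of_nat k) = k %% r.
Proof.
by apply: (@ringpos_eq _ _ (Z.of_nat (k %/ r))); [rewrite ltn_mod | have := divn_eq k r; lia].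
Qed.

Lemma ringposD X k : ringpos r (X + Z.of_nat k) = (ringpos r X + k) %% r.
Proof.
have [t Ht] := ringposP X; set x := ringpos r X in Ht *.
have Hxk := divn_eq (x + k) r.
apply: (@ringpos_eq _ _ (t + Z.of_nat ((x + k) %/ r))); first by rewrite ltn_mod.
by lia.
Qed.

Lemma ringpos_pred X : ringpos r (X - 1) = (ringpos r X + (r - 1)) %% r.
Proof.
have -> : (X - 1 = (X - Z.of_nat r) + Z.of_nat (r - 1))%Z by lia.
rewrite ringposD; congr ((_ + _) %% _).
have [t Ht] := ringposP X.
by apply: (@ringpos_eq _ _ (t - 1)); [exact: ringpos_lt | lia].
Qed.

Lemma ringpos_eqP p q :
  ringpos r p = ringpos r q -> exists s, (p - q = s * Z.of_nat r)%Z.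
Proof.
move=> pq; have [t1 H1] := ringposP p; have [t2 H2] := ringposP q.
by exists (t1 - t2)%Z; rewrite pq in H1; lia.
Qed.

Lemma ringpos_diff (x y : 'I_r) s :
  ringpos r (Z.of_nat x + Z.of_nat (ringpos r (Z.of_nat y - Z.of_nat x)) + s * Z.of_nat r) = y.
Proof.
have [u Hu] := ringposP (Z.of_nat y - Z.of_nat x).
by apply: (@ringpos_eq _ _ (s - u)); [exact: ltn_ord | lia].
Qed.

Lemma nearest_lift (x y : 'I_r) :
  exists2 Y, y = ringpos r Y :> nat & (Z.abs (Y - Z.of_nat x) <= Z.of_nat r./2)%Z.
Proof.
have := ringpos_lt (Z.of_nat y - Z.of_nat x).
have := ringpos_diff x y; set t := ringpos r _ => lift lt_t.
case: (leqP t r./2) => t_h.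
  by exists (Z.of_nat x + Z.of_nat t)%Z; [rewrite -(lift 0%Z) Z.mul_0_l Z.add_0_r | lia].
by exists (Z.of_nat x + Z.of_nat t - Z.of_nat r)%Z; [rewrite -(lift (-1)%Z) | lia].
Qed.

Lemma ringpos_lift_cases y Y : y < r -> y = ringpos r Y ->
  [\/ Y = Z.of_nat y, Y = (Z.of_nat y - Z.of_nat r)%Z,
       (Z.of_nat y + Z.of_nat r <= Y)%Z | (Y <= Z.of_nat y - 2 * Z.of_nat r)%Z].
Proof.
move=> y_lt ey; have [t Ht] := ringposP Y; rewrite -ey in Ht.
have [t_ge1 | [t0 | [t_m1 | t_le]]] :
  (1 <= t \/ t = 0 \/ t = -1 \/ t <= -2)%Z by lia.
- by constructor 3; nia.
- by constructor 1; lia.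
- by constructor 2; lia.
- by constructor 4; nia.
Qed.

End RingPositions.

Lemma Z_no_multiple_between (u s m : Z) : (0 < u < m)%Z -> u <> (s * m)%Z.
Proof. by move=> u_bounds u_sm; case: (Z.le_gt_cases s 0) => s_sign; nia. Qed.

(** * Cubes of rings with windows *)

Definition cube_rings (n r : nat) (W : nat -> nat -> bool) : rel (bvec n * 'I_r) :=
  fun u v =>
  ((u.2 == v.2) && [exists j : 'I_n, W u.2 j && (v.1 == vadd u.1 (evec n j))])
  || ((u.1 == v.1) &&
      (((v.2 : nat) == (u.2 + 1) %% r) || ((v.2 : nat) == (u.2 + (r - 1)) %% r))).

Definition window n (W : nat -> nat -> bool) (x : nat) : {set 'I_n} :=
  [set j : 'I_n | W x j].

Definition diffset n (a b : bvec n) : {set 'I_n} := [set j | a j != b j].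

Definition patch n (a b : bvec n) (C : {set 'I_n}) : bvec n :=
  [ffun i => if i \in C then b i else a i].

Definition vone n : bvec n := [ffun _ => true].

Definition covers n r (W : nat -> nat -> bool) (lo hi : Z) : Prop :=
  forall j : 'I_n, exists2 p, (lo <= p <= hi)%Z & W (ringpos r p) j.

Fixpoint swept n r (W : nat -> nat -> bool) (s X : Z) (k : nat) : {set 'I_n} :=
  if k is k'.+1 then window n W (ringpos r X) :|: swept n r W s (X + s)%Z k'
  else window n W (ringpos r X).

(* Length of a shortest walk on Z from 0 to a point at distance D that
   visits an interval of length at least c. *)
Definition excursion (c D : Z) : Z := if (c <=? D)%Z then D else (2 * c - D)%Z.

Arguments cube_rings : clear implicits.
Arguments window : clear implicits.
Arguments swept : clear implicits.

Lemma flipE n (a : bvec n) (j i : 'I_n) :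
  vadd a (evec n j) i = if i == j then ~~ a i else a i.
Proof.
rewrite /vadd /evec !ffunE (modn_small (ltn_ord j)).
have -> : (i == j :> nat) = (i == j) by [].
by case: eqVneq => [->|_]; rewrite ?eqxx ?addbT ?addbF.
Qed.

Lemma evec_mod m k : evec m (k %% m) = evec m k.
Proof. by apply/ffunP => i; rewrite !ffunE modn_mod. Qed.

Lemma patch_patch n (a b : bvec n) A B : patch (patch a b A) b B = patch a b (A :|: B).
Proof. by apply/ffunP => i; rewrite !ffunE inE; case: (i \in A); case: (i \in B). Qed.

Lemma diffset_patch n (a b : bvec n) A : diffset (patch a b A) b = diffset a b :\: A.
Proof. by apply/setP => i; rewrite !inE ffunE; case: (i \in A); rewrite ?eqxx. Qed.

Lemma card_split n (A C D : {set 'I_n}) :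
  #|A :&: D| + #|C :&: (D :\: A)| <= #|(A :|: C) :&: D|.
Proof.
rewrite -cardsUI.
have -> : (A :&: D) :&: (C :&: (D :\: A)) = set0.
  by apply/setP => i; rewrite !inE; case: (i \in A); rewrite ?andbF.
rewrite cards0 addn0; apply: subset_leq_card; apply/subsetP => i.
by rewrite !inE; case: (i \in A); case: (i \in C); case: (i \in D).
Qed.

Lemma excursion_turn (X Y c : Z) : (0 <= c)%Z -> exists P,
  (c <= Z.max X (Z.max P Y) - Z.min X (Z.min P Y))%Z /\
  (Z.abs (P - X) + Z.abs (Y - P) <= excursion c (Z.abs (Y - X)))%Z.
Proof.
rewrite /excursion => c_ge0; case: (Z.leb_spec c (Z.abs (Y - X))) => cY.
  by exists Y; lia.
by case: (Z.le_gt_cases X Y) => XY; [exists (Y - c)%Z | exists (Y + c)%Z]; lia.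
Qed.

Lemma excursion_le_span (c lo hi X Y : Z) :
  (lo <= X <= hi)%Z -> (lo <= Y <= hi)%Z -> (c <= hi - lo)%Z ->
  (excursion c (Z.abs (Y - X)) <= 2 * (hi - lo) - Z.abs (Y - X))%Z.
Proof. by rewrite /excursion; case: (Z.leb_spec c (Z.abs (Y - X))); lia. Qed.

Lemma excursion_ge_max (c D : Z) : (Z.max D (2 * c - D) <= excursion c D)%Z.
Proof. by rewrite /excursion; case: (Z.leb_spec c D); lia. Qed.

Lemma excursion_le_max (c D M : Z) :
  (0 <= D <= M)%Z -> (2 * c - D <= M)%Z -> (excursion c D <= M)%Z.
Proof. by rewrite /excursion; case: (Z.leb_spec c D); lia. Qed.

Definition dir (X P : Z) : Z := if (X <=? P)%Z then 1%Z else (-1)%Z.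
Definition steps (X P : Z) : nat := Z.to_nat (Z.abs (P - X)).

Lemma dirP X P : (dir X P = 1 \/ dir X P = -1)%Z.
Proof. by rewrite /dir; case: (X <=? P)%Z; [left | right]. Qed.

Lemma dir_steps X P : (X + dir X P * Z.of_nat (steps X P) = P)%Z.
Proof. by rewrite /dir /steps; case: (Z.leb_spec X P); lia. Qed.

Lemma segment_stepP (X P p : Z) : (Z.min X P <= p <= Z.max X P)%Z ->
  exists2 i : nat, i <= steps X P & p = (X + dir X P * Z.of_nat i)%Z.
Proof.
move=> Xp; exists (Z.to_nat (Z.abs (p - X))); first by apply/leP; rewrite /steps; lia.
by rewrite /dir; case: (Z.leb_spec X P); lia.
Qed.

Section CubeRings.
Variables (n r : nat) (W : nat -> nat -> bool).
Hypothesis r_gt0 : 0 < r.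
Local Notation G := (cube_rings n r W).

Lemma mem_swept s k X (j : 'I_n) (i : nat) :
  i <= k -> W (ringpos r (X + s * Z.of_nat i)) j -> j \in swept n r W s X k.
Proof.
elim: k X i => [|k IH] X [|i] //= le_ik; rewrite ?Z.mul_0_r ?Z.add_0_r => Wj.
- by rewrite inE.
- by rewrite !inE Wj.
rewrite inE; apply/orP; right; apply: (IH _ i) => //.
have -> : (X + s + s * Z.of_nat i = X + s * Z.of_nat i.+1)%Z.
  by rewrite Nat2Z.inj_succ; ring.
exact: Wj.
Qed.

Lemma mem_swept_segment X P (j : 'I_n) p :
  (Z.min X P <= p <= Z.max X P)%Z -> W (ringpos r p) j ->
  j \in swept n r W (dir X P) X (steps X P).
Proof. by case/segment_stepP=> i le_i ->; apply: mem_swept. Qed.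

Lemma walkb_fix_window b (x : 'I_r) m (a : bvec n) :
  #|window n W x :&: diffset a b| = m ->
  walkb G m (a, x) (patch a b (window n W x), x).
Proof.
elim: m a => [|m IH] a card_m.
  rewrite walkb0; apply/eqP; congr (_, _); apply/ffunP => i; rewrite ffunE.
  case: ifP => // iW; apply/eqP; apply: contraT => ab.
  have : i \in window n W x :&: diffset a b by rewrite inE iW inE ab.
  by rewrite (cards0_eq card_m) inE.
have : 0 < #|window n W x :&: diffset a b| by rewrite card_m.
case/card_gt0P => j; rewrite !inE => /andP[jW jD].
set a' := vadd a (evec n j).
have card_m' : #|window n W x :&: diffset a' b| = m.
  have -> : window n W x :&: diffset a' b = (window n W x :&: diffset a b) :\ j.
    apply/setP => i; rewrite !inE /a' flipE.
    by case: (eqVneq i j) => [->|_] //=; move: jD; case: (a j); case: (b j); rewrite ?andbF.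
  by move: card_m; rewrite (cardsD1 j) !inE jW jD /=; lia.
have -> : patch a b (window n W x) = patch a' b (window n W x).
  apply/ffunP => i; rewrite !ffunE; case: ifP => // iW.
  rewrite (modn_small (ltn_ord j)); have -> : (i == j :> nat) = (i == j) by [].
  by case: (eqVneq i j) => [eij|_]; [move: iW; rewrite eij inE jW | rewrite addbF].
rewrite walkbS; apply/existsP; exists (a', x); rewrite IH // andbT.
by apply/orP; left; rewrite /= eqxx /=; apply/existsP; exists j; rewrite jW eqxx.
Qed.

Lemma cube_rings_ring_step a s X (x y : 'I_r) : (s = 1 \/ s = -1)%Z ->
  x = ringpos r X :> nat -> y = ringpos r (X + s) :> nat -> G (a, x) (a, y).
Proof.
move=> s_unit ex ey; apply/orP; right; rewrite /= eqxx /= ey ex.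
case: s_unit => ->; first by rewrite (ringposD r_gt0 X 1) eqxx.
have -> : (X + -1 = X - 1)%Z by lia.
by rewrite ringpos_pred // eqxx orbT.
Qed.

Lemma walkb_sweep b s k : (s = 1 \/ s = -1)%Z ->
  forall (a : bvec n) X (x y : 'I_r), x = ringpos r X :> nat ->
  y = ringpos r (X + s * Z.of_nat k)%Z :> nat ->
  exists2 L, L <= k + #|swept n r W s X k :&: diffset a b|
           & walkb G L (a, x) (patch a b (swept n r W s X k), y).
Proof.
move=> s_unit; elim: k => [|k IH] a X x y ex ey.
  have <- : x = y by apply: ord_inj; rewrite ex ey Z.mul_0_r Z.add_0_r.
  by exists #|swept n r W s X 0 :&: diffset a b|; rewrite //= -ex; exact: walkb_fix_window.
set x' : 'I_r := Ordinal (ringpos_lt r_gt0 (X + s)).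
have ey' : y = ringpos r (X + s + s * Z.of_nat k) :> nat.
  by rewrite ey Nat2Z.inj_succ; congr (ringpos r _); ring.
have [L' le_L' walk'] := IH (patch a b (window n W x)) (X + s)%Z x' y erefl ey'.
exists (#|window n W x :&: diffset a b| + 1 + L').
  rewrite diffset_patch in le_L'.
  have := card_split (window n W x) (swept n r W s (X + s) k) (diffset a b).
  rewrite /= -ex; move: le_L'.
  set A := #|window _ _ _ :&: _|; set B := #|swept _ _ _ _ _ _ :&: _|.
  set C := #|(_ :|: _) :&: _|; lia.
rewrite /= -ex -patch_patch -addnA.
apply: (walkb_cat (walkb_fix_window (b:=b) (x:=x) (a:=a) erefl)).
apply: (walkb_cat (walkb1 _) walk'); exact: (cube_rings_ring_step _ s_unit ex).
Qed.

Lemma walkb_via a b X P Y (x y : 'I_r) :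
  x = ringpos r X :> nat -> y = ringpos r Y :> nat ->
  covers n r W (Z.min X (Z.min P Y)) (Z.max X (Z.max P Y)) ->
  exists2 L, L <= steps X P + steps P Y + n & walkb G L (a, x) (b, y).
Proof.
move=> ex ey cov.
set S1 := swept n r W (dir X P) X (steps X P).
set S2 := swept n r W (dir P Y) P (steps P Y).
set p : 'I_r := Ordinal (ringpos_lt r_gt0 P).
have [L1 le_L1 walk1] := walkb_sweep b (dirP X P) a ex
  (etrans (erefl (p : nat)) (f_equal (ringpos r) (esym (dir_steps X P)))).
have [L2 le_L2 walk2] := walkb_sweep b (dirP P Y) (patch a b S1) (X:=P) (x:=p) erefl
  (etrans ey (f_equal (ringpos r) (esym (dir_steps P Y)))).
exists (L1 + L2); last first.
  apply: (walkb_cat walk1); rewrite patch_patch in walk2.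
  suff patch_b : patch a b (S1 :|: S2) = b by rewrite patch_b in walk2.
  apply/ffunP => j; rewrite ffunE; suff -> : j \in S1 :|: S2 by [].
  have [q q_in Wq] := cov j; rewrite inE.
  have [qXP | qPY] : (Z.min X P <= q <= Z.max X P \/ Z.min P Y <= q <= Z.max P Y)%Z by lia.
    by rewrite (mem_swept_segment qXP Wq).
  by rewrite (mem_swept_segment qPY Wq) orbT.
rewrite diffset_patch in le_L2.
have := card_split S1 S2 (diffset a b).
have : #|(S1 :|: S2) :&: diffset a b| <= n by apply: leq_trans (max_card _) _; rewrite card_ord.
move: le_L1 le_L2; set A := #|S1 :&: _|; set B := #|S2 :&: _|.
set C := #|(S1 :|: S2) :&: _|; lia.
Qed.

Lemma walkb_span b (y : 'I_r) k (a : bvec n) (x : 'I_r) X :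
  x = ringpos r X :> nat -> walkb G k (a, x) (b, y) ->
  exists lo hi Y, [/\ (lo <= X <= hi)%Z, (lo <= Y <= hi)%Z, y = ringpos r Y :> nat,
    forall j : 'I_n, a j != b j -> exists2 p, (lo <= p <= hi)%Z & W (ringpos r p) j
    & (Z.of_nat #|diffset a b| + 2 * (hi - lo) - Z.abs (Y - X) <= Z.of_nat k)%Z].
Proof.
elim: k a x X => [|k IH] a x X ex.
  rewrite walkb0 => /eqP [-> xy]; exists X, X, X; split; try lia; first by rewrite -xy.
    by move=> j; rewrite eqxx.
  have -> : diffset b b = set0 by apply/setP => j; rewrite !inE eqxx.
  by rewrite cards0; lia.
rewrite walkbS => /existsP[[a' x'] /andP[/orP[] /andP[/eqP xx' E] walk]];
  rewrite /= in xx' E.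
  case/existsP: E => j0 /andP[Wj0 /eqP ea']; rewrite /= in ea'.
  have [lo [hi [Y [X_in Y_in ey cov len]]]] := IH a' x' X (etrans (f_equal val (esym xx')) ex) walk.
  exists lo, hi, Y; split => //.
    move=> j; case: (eqVneq j j0) => [-> _|ne]; first by exists X; rewrite // -ex.
    by move=> ab; apply: cov; rewrite ea' flipE (negPf ne).
  suff : #|diffset a b| <= #|diffset a' b| + 1.
    by lia.
  have : diffset a b \subset j0 |: diffset a' b.
    apply/subsetP => j; rewrite !inE ea' flipE.
    by case: (eqVneq j j0) => //= _ ->; rewrite orbT.
  by move/subset_leq_card; rewrite cardsU1; case: (j0 \in diffset a' b); lia.
rewrite -xx' in walk.
have [X' ex' XX'] : exists2 X', x' = ringpos r X' :> nat & (X' = X + 1 \/ X' = X - 1)%Z.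
  case/orP: E => /eqP ->; rewrite ex.
    by exists (X + 1)%Z; [rewrite (ringposD r_gt0 X 1) | left].
  by exists (X - 1)%Z; [rewrite ringpos_pred | right].
have [lo [hi [Y [X_in Y_in ey cov len]]]] := IH a x' X' ex' walk.
exists (Z.min lo X), (Z.max hi X), Y; split => //; try lia.
by move=> j /cov [p p_in Wp]; exists p => //; lia.
Qed.

Lemma dist_cube_rings_ub c (u v : bvec n * 'I_r) Y : (0 <= c)%Z ->
  (forall lo hi, (c <= hi - lo)%Z -> covers n r W lo hi) ->
  v.2 = ringpos r Y :> nat ->
  (Z.of_nat (dist G u v) <= Z.of_nat n + excursion c (Z.abs (Y - Z.of_nat u.2)))%Z.
Proof.
case: u v => [a x] [b y] /= c_ge0 cov ey.
have [P [span len]] := excursion_turn (Z.of_nat x) Y c_ge0.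
have ex : x = ringpos r (Z.of_nat x) :> nat by rewrite ringpos_small.
have [L le_L walk] := walkb_via a b ex ey (cov _ _ span).
have le_dist := dist_le_walkb walk; set D := dist _ _ _; rewrite -/D in le_dist.
by rewrite /steps in le_L; lia.
Qed.

Lemma dist_cube_rings_lb c (x y : 'I_r) D :
  (forall lo hi, covers n r W lo hi -> (c <= hi - lo)%Z) ->
  D <= #|{: bvec n * 'I_r}| ->
  (forall Y, y = ringpos r Y :> nat ->
     (Z.of_nat D <= Z.of_nat n + excursion c (Z.abs (Y - Z.of_nat x)))%Z) ->
  D <= dist G (vzero n, x) (vone n, y).
Proof.
move=> span DT le_D; apply: dist_ge => // k lt_kD; apply/negP => walk.
have ex : x = ringpos r (Z.of_nat x) :> nat by rewrite ringpos_small.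
have [lo [hi [Y [X_in Y_in ey cov len]]]] := walkb_span ex walk.
have c_span : (c <= hi - lo)%Z by apply: span => j; apply: cov; rewrite !ffunE.
have full : diffset (vzero n) (vone n) = setT by apply/setP => j; rewrite !inE !ffunE.
rewrite full cardsT card_ord in len.
by have := excursion_le_span X_in Y_in c_span; have := le_D Y ey; lia.
Qed.

End CubeRings.

Lemma card_cube_rings_states n r : n.+1 * r <= #|{: bvec n * 'I_r}|.
Proof. by rewrite card_prod card_ffun card_bool !card_ord leq_mul2r ltn_expl ?orbT. Qed.

(** * The recursive cube of rings Q_n(d,n) *)

Definition Q_window (n d x j : nat) : bool := [exists k : 'I_d, j == (k + d * x) %% n].

Lemma Qadj_cube_rings n d : 0 < n ->
  {mono id : u v / Qadj n d n u v >-> cube_rings n n (Q_window n d) u v}.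
Proof.
move=> n_gt0 u v; rewrite /Qadj /cube_rings; congr (_ || _); congr (_ && _).
apply/existsP/existsP => [[j /andP[/existsP[k /eqP ej] /eqP ->]]|[k /eqP ->]].
  by exists k; rewrite ej evec_mod.
exists (Ordinal (ltn_pmod (k + d * u.2) n_gt0)).
by rewrite evec_mod eqxx andbT; apply/existsP; exists k.
Qed.

(* Coordinate j lies in the window of lo + e, where d e + k = (j - d lo) mod n. *)
Lemma Q_window_covers n d lo hi : 0 < d -> 0 < n ->
  (Z.of_nat n <= (hi - lo + 1) * Z.of_nat d)%Z -> covers n n (Q_window n d) lo hi.
Proof.
move=> d_gt0 n_gt0 span j.
set q := ((Z.of_nat j - Z.of_nat d * lo) mod Z.of_nat n)%Z.
have q_bounds := Z.mod_pos_bound (Z.of_nat j - Z.of_nat d * lo) (Z.of_nat n) ltac:(lia).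
have q_eq := Z.div_mod (Z.of_nat j - Z.of_nat d * lo) (Z.of_nat n) ltac:(lia).
rewrite -/q in q_bounds q_eq.
set w := ((Z.of_nat j - Z.of_nat d * lo) / Z.of_nat n)%Z in q_eq.
have k_bounds := Z.mod_pos_bound q (Z.of_nat d) ltac:(lia).
have k_eq := Z.div_mod q (Z.of_nat d) ltac:(lia).
set k := (q mod Z.of_nat d)%Z in k_bounds k_eq; set e := (q / Z.of_nat d)%Z in k_eq.
have e_ge0 : (0 <= e)%Z by nia.
have e_le : (e <= hi - lo)%Z by nia.
exists (lo + e)%Z; first lia.
have [t Ht] := ringposP n_gt0 (lo + e)%Z.
set z := ringpos n (lo + e) in Ht *.
apply/existsP; exists (Ordinal (ltac:(apply/ltP; lia) : Z.to_nat k < d)).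
rewrite -(ringpos_nat n_gt0); apply/eqP; symmetry.
apply: (ringpos_eq n_gt0 (t := (- w - Z.of_nat d * t)%Z)); first exact: ltn_ord.
rewrite /= Nat2Z.inj_add Nat2Z.inj_mul Z2Nat.id; last lia.
nia.
Qed.

(* The windows of lo, ..., hi are d (hi - lo + 1) consecutive coordinates
   ending just before d (hi + 1); if there are fewer than n of them, that
   coordinate is missed. *)
Lemma Q_window_span n d lo hi : 0 < d -> 0 < n ->
  covers n n (Q_window n d) lo hi -> (Z.of_nat n <= (hi - lo + 1) * Z.of_nat d)%Z.
Proof.
move=> d_gt0 n_gt0 cov; apply/Z.nlt_ge => short.
set J := Ordinal (ringpos_lt n_gt0 (Z.of_nat d * (hi + 1))%Z).
have [p p_in /existsP[k /eqP]] := cov J.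
rewrite -(ringpos_nat n_gt0) => /(ringpos_eqP n_gt0) [s Hs].
have [t Ht] := ringposP n_gt0 p.
rewrite Nat2Z.inj_add Nat2Z.inj_mul in Hs.
have k_lt := ltn_ord k.
apply: (@Z_no_multiple_between (Z.of_nat d * (hi + 1 - p) - Z.of_nat k)
          (s - Z.of_nat d * t) (Z.of_nat n)); nia.
Qed.

Lemma ceil_divn_bounds n d : 0 < d -> n <= (n + d.-1) %/ d * d < n + d.
Proof. by move=> d_gt0; have := divn_eq (n + d.-1) d; have := ltn_pmod (n + d.-1) d_gt0; lia. Qed.

Section RecursiveCubeOfRings.
Variables (n d : nat).
Hypotheses (d_ge2 : 2 <= d) (n_ge3 : 3 <= n).
Local Notation q := ((n + d.-1) %/ d).
Local Notation G := (cube_rings n n (Q_window n d)).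

Let n_gt0 : 0 < n := leq_trans (isT : 0 < 3) n_ge3.
Let d_gt0 : 0 < d := leq_trans (isT : 0 < 2) d_ge2.

Let q_bounds : [/\ 1 <= q, 2 * q - 2 <= n & n <= q * d < n + d].
Proof. by have := ceil_divn_bounds n d_gt0; split; nia. Qed.

Let span_cover lo hi : (Z.of_nat (q - 1) <= hi - lo)%Z <-> covers n n (Q_window n d) lo hi.
Proof.
have [q_ge1 _ qd] := q_bounds; split => [span | /Q_window_span cov].
  by apply: Q_window_covers => //; nia.
by have := cov d_gt0 n_gt0; nia.
Qed.

Lemma dist_Q_le u v : dist G u v <= n + maxn n./2 (2 * q - 2).
Proof.
have [Y ey near] := nearest_lift n_gt0 u.2 v.2.
have cov lo hi : (Z.of_nat (q - 1) <= hi - lo)%Z -> covers n n (Q_window n d) lo hi.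
  by case: (span_cover lo hi).
have := dist_cube_rings_ub n_gt0 (u := u) (Nat2Z.is_nonneg _) cov ey.
have [q_ge1 _ _] := q_bounds.
have : (excursion (Z.of_nat (q - 1)) (Z.abs (Y - Z.of_nat u.2))
        <= Z.of_nat (maxn n./2 (2 * q - 2)))%Z by apply: excursion_le_max; lia.
by move: (excursion _ _) (maxn _ _) => E M; lia.
Qed.

Lemma dist_Q_ge (y : 'I_n) D :
  D <= n * n.+1 ->
  (forall Y, y = ringpos n Y :> nat ->
     (Z.of_nat D <= Z.of_nat n + excursion (Z.of_nat (q - 1)) (Z.abs Y))%Z) ->
  D <= dist G (vzero n, Ordinal n_gt0) (vone n, y).
Proof.
move=> D_le le_D; apply: (dist_cube_rings_lb n_gt0 (c := Z.of_nat (q - 1))).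
- by move=> lo hi /span_cover.
- by apply: leq_trans (card_cube_rings_states n n); rewrite mulnC.
- by move=> Y /le_D; rewrite /= Z.sub_0_r.
Qed.

Lemma diam_Q_cube_rings : diam G = n + maxn n./2 (2 * q - 2).
Proof.
have [q_ge1 q_le _] := q_bounds.
apply/eqP; rewrite eqn_leq (diam_le dist_Q_le) /= addn_maxr geq_max.
have half_lt : n./2 < n by lia.
apply/andP; split; apply: leq_trans _ (dist_le_diam _ _ _).
  apply: (@dist_Q_ge (Ordinal half_lt)); first by nia.
  move=> Y /(ringpos_lift_cases (y := n./2) n_gt0 half_lt) lift.
  by have := excursion_ge_max (c := Z.of_nat (q - 1)) (D := Z.abs Y); case: lift => [->|->|?|?]; lia.
apply: (@dist_Q_ge (Ordinal n_gt0)); first by nia.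
move=> Y /(ringpos_lift_cases (y := 0) n_gt0 n_gt0) lift.
by have := excursion_ge_max (c := Z.of_nat (q - 1)) (D := Z.abs Y); case: lift => [->|->|?|?]; lia.
Qed.

Lemma diam_Qadj : diam (Qadj n d n) = n + maxn n./2 (2 * q - 2).
Proof. by rewrite -(diam_iso (@inj_id _) (Qadj_cube_rings d n_gt0)) diam_Q_cube_rings. Qed.

End RecursiveCubeOfRings.

(** * The cube of rings COR(d,r) *)

Lemma eqn_modZ (k1 k2 m : nat) : 0 < m ->
  k1 %% m = k2 %% m <-> exists s, Z.of_nat k1 = (Z.of_nat k2 + s * Z.of_nat m)%Z.
Proof.
move=> m_gt0; rewrite -!(ringpos_nat m_gt0); split.
  by move/(ringpos_eqP m_gt0) => [s Hs]; exists s; lia.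
case=> s ->; have [t Ht] := ringposP m_gt0 (Z.of_nat k2).
by apply: (ringpos_eq m_gt0 (t := (t + s)%Z)); [exact: ringpos_lt | lia].
Qed.

Lemma vatE m (b : bvec m) k (m_gt0 : 0 < m) : vat b k = b (Ordinal (ltn_pmod k m_gt0)).
Proof.
apply/existsP/idP => [[i /andP[/eqP ik bi]]|bk].
  by have -> : Ordinal (ltn_pmod k m_gt0) = i by apply: ord_inj; rewrite /= ik.
by exists (Ordinal (ltn_pmod k m_gt0)); rewrite eqxx.
Qed.

Lemma vat_modn m (b : bvec m) k1 k2 : k1 %% m = k2 %% m -> vat b k1 = vat b k2.
Proof. by rewrite /vat => ->. Qed.

Lemma sigma_modn m j j' (b : bvec m) : j %% m = j' %% m -> sigma j b = sigma j' b.
Proof. by rewrite /sigma => ->. Qed.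

Lemma sigma0 m (b : bvec m) : sigma 0 b = b.
Proof.
apply/ffunP => i; rewrite ffunE.
have m_gt0 : 0 < m by apply: leq_ltn_trans (ltn_ord i).
rewrite vatE; congr (b _); apply: ord_inj => /=.
by rewrite mod0n subn0 modnDr modn_small.
Qed.

Lemma sigmaD m j (a c : bvec m) : sigma j (vadd a c) = vadd (sigma j a) (sigma j c).
Proof.
apply/ffunP => i; rewrite !ffunE.
have m_gt0 : 0 < m by apply: leq_ltn_trans (ltn_ord i).
by rewrite !vatE ffunE.
Qed.

Lemma sigma_evec m j k : sigma j (evec m k) = evec m (k + j).
Proof.
apply/ffunP => i; rewrite !ffunE.
have m_gt0 : 0 < m by apply: leq_ltn_trans (ltn_ord i).
rewrite vatE ffunE /=.
have hJ := divn_eq j m; have hJl := ltn_pmod j m_gt0.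
set J := j %% m in hJ hJl *; set qj := j %/ m in hJ.
have i_lt := ltn_ord i.
apply/eqP/eqP.
  move/(eqn_modZ _ _ m_gt0) => [s hs].
  rewrite -(modn_small i_lt); apply/(eqn_modZ _ _ m_gt0).
  by exists (s - 1 - Z.of_nat qj)%Z; lia.
move=> e; apply/(eqn_modZ _ _ m_gt0).
have : i %% m = (k + j) %% m by rewrite e modn_mod.
move/(eqn_modZ _ _ m_gt0) => [s hs].
by exists (s + 1 + Z.of_nat qj)%Z; lia.
Qed.

Lemma sigma_comp m i j (b : bvec m) : sigma i (sigma j b) = sigma (i + j) b.
Proof.
apply/ffunP => t; rewrite !ffunE.
have m_gt0 : 0 < m by apply: leq_ltn_trans (ltn_ord t).
rewrite vatE ffunE /=; apply: vat_modn; apply/(eqn_modZ _ _ m_gt0).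
have h1 := divn_eq i m; have h1l := ltn_pmod i m_gt0.
have h2 := divn_eq j m; have h2l := ltn_pmod j m_gt0.
have h3 := divn_eq (i + j) m; have h3l := ltn_pmod (i + j) m_gt0.
have h4 := divn_eq (t + m - i %% m) m; have h4l := ltn_pmod (t + m - i %% m) m_gt0.
have t_lt := ltn_ord t.
move: h1 h1l h2 h2l h3 h3l h4 h4l.
set I := i %% m; set J := j %% m; set IJ := (i + j) %% m; set A := (t + m - I) %% m.
set qi := i %/ m; set qj := j %/ m; set qij := (i + j) %/ m; set qa := (t + m - I) %/ m.
move=> h1 h1l h2 h2l h3 h3l h4 h4l.
by exists (1 + Z.of_nat qi + Z.of_nat qj - Z.of_nat qij - Z.of_nat qa)%Z; lia.
Qed.

Lemma sigma_inj m j : 0 < m -> injective (@sigma m j).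
Proof.
move=> m_gt0 a b e.
have : sigma (m - j %% m) (sigma j a) = sigma (m - j %% m) (sigma j b) by rewrite e.
have jK : (m - j %% m + j) %% m = 0 %% m.
  apply/(eqn_modZ _ _ m_gt0).
  have := divn_eq j m; have := ltn_pmod j m_gt0.
  by exists (1 + Z.of_nat (j %/ m))%Z; lia.
by rewrite !sigma_comp !(sigma_modn _ jK) !sigma0.
Qed.

Lemma vaddv0 m (b : bvec m) : vadd b (vzero m) = b.
Proof. by apply/ffunP => i; rewrite !ffunE addbF. Qed.

Lemma neg_modn_inj r x x' : x < r -> x' < r -> (r - x) %% r = (r - x') %% r -> x = x'.
Proof.
move=> x_lt x'_lt /(eqn_modZ _ _ (leq_ltn_trans (leq0n x) x_lt)) [s hs].
by case: (Z.le_gt_cases s 0) => s_le; [case: (Z.le_gt_cases 0 s) => s_ge|]; nia.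
Qed.

Lemma neg_modn_succ r x : x < r ->
  (r - (x + 1) %% r) %% r = ((r - x) %% r + (r - 1)) %% r.
Proof.
move=> x_lt; have r_gt0 : 0 < r by lia.
apply/(eqn_modZ _ _ r_gt0).
have h1 := divn_eq (x + 1) r; have h1l := ltn_pmod (x + 1) r_gt0.
have h2 := divn_eq (r - x) r; have h2l := ltn_pmod (r - x) r_gt0.
move: h1 h1l h2 h2l.
set a1 := (x + 1) %% r; set a2 := (r - x) %% r.
set q1 := (x + 1) %/ r; set q2 := (r - x) %/ r => h1 h1l h2 h2l.
by exists (Z.of_nat q1 + Z.of_nat q2 - 1)%Z; lia.
Qed.

Lemma neg_modn_pred r x : x < r ->
  (r - (x + (r - 1)) %% r) %% r = ((r - x) %% r + 1) %% r.
Proof.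
move=> x_lt; have r_gt0 : 0 < r by lia.
apply/(eqn_modZ _ _ r_gt0).
have h1 := divn_eq (x + (r - 1)) r; have h1l := ltn_pmod (x + (r - 1)) r_gt0.
have h2 := divn_eq (r - x) r; have h2l := ltn_pmod (r - x) r_gt0.
move: h1 h1l h2 h2l.
set a1 := (x + (r - 1)) %% r; set a2 := (r - x) %% r.
set q1 := (x + (r - 1)) %/ r; set q2 := (r - x) %/ r => h1 h1l h2 h2l.
by exists (Z.of_nat q1 + Z.of_nat q2 - 1)%Z; lia.
Qed.

Lemma block_index_lt d r (k : 'I_d) z : z < r -> k + d * z < d * r.
Proof.
move=> z_lt; have := ltn_ord k.
have : d * z.+1 <= d * r by rewrite leq_mul2l z_lt orbT.
by rewrite mulnS; lia.
Qed.

Lemma evec_block_modn d r k x : evec (d * r) (k + d * (x %% r)) = evec (d * r) (k + d * x).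
Proof. by rewrite -evec_mod muln_modr modnDmr evec_mod. Qed.

Definition COR_window (d x j : nat) : bool := j %/ d == x.

Section CubeOfRingsIso.
Variables (d r : nat).
Hypotheses (d_gt0 : 0 < d) (r_gt1 : 1 < r).
Local Notation G := (cube_rings (d * r) r (COR_window d)).

Let r_gt0 : 0 < r := ltnW r_gt1.

Let dr_gt0 : 0 < d * r := leq_trans r_gt0 (leq_pmull r d_gt0).

Lemma sigma_neg_succ x (a : bvec (d * r)) : x < r ->
  sigma (d * (r - (x + 1) %% r)) (sigma (d * 1) a) = sigma (d * (r - x)) a.
Proof.
move=> x_lt; rewrite sigma_comp; apply: sigma_modn; apply/(eqn_modZ _ _ dr_gt0).
have h1 := divn_eq (x + 1) r; have h1l := ltn_pmod (x + 1) r_gt0.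
move: h1 h1l; set a1 := (x + 1) %% r; set q1 := (x + 1) %/ r => h1 h1l.
exists (Z.of_nat q1).
have -> : d * (r - a1) + d * 1 = d * (r - x) + q1 * (d * r).
  by rewrite -!mulnDr mulnCA -mulnDr; congr (d * _); lia.
by lia.
Qed.

Lemma sigma_neg_pred x (a : bvec (d * r)) : x < r ->
  sigma (d * (r - (x + (r - 1)) %% r)) (sigma (d * (r - 1)) a) = sigma (d * (r - x)) a.
Proof.
move=> x_lt; rewrite sigma_comp; apply: sigma_modn; apply/(eqn_modZ _ _ dr_gt0).
have h1 := divn_eq (x + (r - 1)) r; have h1l := ltn_pmod (x + (r - 1)) r_gt0.
move: h1 h1l; set a1 := (x + (r - 1)) %% r; set q1 := (x + (r - 1)) %/ r => h1 h1l.
exists (Z.of_nat q1).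
have -> : d * (r - a1) + d * (r - 1) = d * (r - x) + q1 * (d * r).
  by rewrite -!mulnDr mulnCA -mulnDr; congr (d * _); lia.
by lia.
Qed.

(* (a, x) |-> (sigma^{-dx} a, -x): the generator (e_k, 0) applied at x then
   flips coordinate k + d (-x), which lies in block -x, the window of -x. *)
Definition COR_to_cube (u : bvec (d * r) * 'I_r) : bvec (d * r) * 'I_r :=
  (sigma (d * (r - u.2)) u.1, Ordinal (ltn_pmod (r - u.2) r_gt0)).

Lemma COR_to_cube_inj : injective COR_to_cube.
Proof.
move=> [a x] [b y] [ab xy].
have {}xy : x = y by apply: ord_inj; apply: neg_modn_inj.
by rewrite -xy in ab; rewrite (sigma_inj dr_gt0 ab) xy.
Qed.

Lemma COR_to_cube_edge u v : CORadj d r u v -> G (COR_to_cube u) (COR_to_cube v).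
Proof.
case: u v => [a x] [b y] /existsP[[s1 s2] /andP[conn /eqP [eb ey]]].
have x_lt := ltn_ord x; rewrite /CORconn /= in conn.
case/orP: conn => [/andP[/eqP s10 /orP[/eqP s21|/eqP s2r]]|/andP[/eqP s20 /existsP[k /eqP s1k]]].
- have ey' : (y : nat) = (x + 1) %% r by rewrite ey /= s21.
  apply/orP; right; rewrite /= eb s10 vaddv0 ey' s21 sigma_neg_succ // eqxx /=.
  by rewrite neg_modn_succ // eqxx orbT.
- have ey' : (y : nat) = (x + (r - 1)) %% r by rewrite ey /= s2r.
  apply/orP; right; rewrite /= eb s10 vaddv0 ey' s2r sigma_neg_pred // eqxx /=.
  by rewrite neg_modn_pred // eqxx.
have xy : x = y by apply: ord_inj; rewrite ey /= s20 addn0 modn_small.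
apply/orP; left; rewrite /= -xy eqxx /=.
apply/existsP; exists (Ordinal (block_index_lt k (ltn_pmod (r - x) r_gt0))); apply/andP; split.
  by rewrite /COR_window /= addnC mulnC divnMDl // divn_small // addn0.
by rewrite /= eb s20 s1k muln0 sigma0 sigmaD sigma_evec evec_block_modn.
Qed.

Lemma COR_to_cube_edge_inv u v : G (COR_to_cube u) (COR_to_cube v) -> CORadj d r u v.
Proof.
case: u v => [a x] [b y].
have x_lt := ltn_ord x; have y_lt := ltn_ord y.
case/orP => [/andP[xy /existsP[j /andP[Wj /eqP ej]]]|/andP[/eqP ab /orP[/eqP yx|/eqP yx]]];
  try have {}ab : sigma (d * (r - x)) a = sigma (d * (r - y)) b := ab.
  have {}xy : x = y by apply: ord_inj; apply: neg_modn_inj => //; exact: (f_equal val (eqP xy)).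
  rewrite /= -xy in ej Wj.
  apply/existsP; exists (evec (d * r) (Ordinal (ltn_pmod j d_gt0)), Ordinal r_gt0).
  apply/andP; split; first by apply/orP; right; apply/existsP; exists (Ordinal (ltn_pmod j d_gt0)).
  apply/eqP; rewrite /CORmul /=; congr (_, _); last first.
    by apply: ord_inj; rewrite /= -xy addn0 modn_small.
  apply: (@sigma_inj _ (d * (r - x))) => //.
  rewrite ej sigmaD muln0 sigma0 sigma_evec /= -evec_block_modn.
  congr (vadd _ (evec _ _)).
  by have := divn_eq j d; rewrite (eqP Wj) /=; lia.
- have {}yx : y = (x + (r - 1)) %% r :> nat.
    by apply: neg_modn_inj => //; [exact: ltn_pmod | rewrite neg_modn_pred].
  have r1_lt : r - 1 < r by rewrite subn1 ltn_predL.
  apply/existsP; exists (vzero (d * r), Ordinal r1_lt).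
  rewrite /CORconn /= !eqxx orbT /=.
  apply/eqP; congr (_, _); last by apply: ord_inj; rewrite /= yx.
  rewrite vaddv0; apply: (@sigma_inj _ (d * (r - y))) => //.
  by rewrite -ab yx sigma_neg_pred.
have {}yx : y = (x + 1) %% r :> nat.
  by apply: neg_modn_inj => //; [exact: ltn_pmod | rewrite neg_modn_succ].
apply/existsP; exists (vzero (d * r), Ordinal r_gt1).
rewrite /CORconn /= eqxx /=.
apply/eqP; congr (_, _); last by apply: ord_inj; rewrite /= -yx.
rewrite vaddv0; apply: (@sigma_inj _ (d * (r - y))) => //.
by rewrite -ab yx sigma_neg_succ.
Qed.

Lemma COR_to_cube_mono : {mono COR_to_cube : u v / CORadj d r u v >-> G u v}.
Proof. by move=> u v; apply/idP/idP => [/COR_to_cube_edge_inv | /COR_to_cube_edge]. Qed.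

Lemma diam_CORadj_cube_rings : diam (CORadj d r) = diam G.
Proof. exact: esym (diam_iso COR_to_cube_inj COR_to_cube_mono). Qed.

End CubeOfRingsIso.

Section CubeOfRingsDiameter.
Variables (d r : nat).
Hypotheses (d_gt0 : 0 < d) (r_ge3 : 3 <= r).
Local Notation G := (cube_rings (d * r) r (COR_window d)).
Local Notation M := (maxn 3 (r + r./2 - 2)).

Let r_gt1 : 1 < r := leq_trans (isT : 1 < 3) r_ge3.
Let r_gt0 : 0 < r := ltnW r_gt1.

Lemma COR_window_covers lo hi :
  (Z.of_nat r - 1 <= hi - lo)%Z -> covers (d * r) r (COR_window d) lo hi.
Proof.
move=> span j.
have z_lt : j %/ d < r by rewrite ltn_divLR // [r * d]mulnC.
set z := Z.of_nat (j %/ d).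
exists (lo + (z - lo) mod Z.of_nat r)%Z.
  by have := Z.mod_pos_bound (z - lo) (Z.of_nat r) ltac:(lia); lia.
rewrite /COR_window; apply/eqP; symmetry.
apply: (ringpos_eq r_gt0 (t := (- ((z - lo) / Z.of_nat r))%Z)) => //.
by have := Z.div_mod (z - lo) (Z.of_nat r) ltac:(lia); lia.
Qed.

(* Coordinate d ((hi + 1) mod r) lies in block hi + 1 only. *)
Lemma COR_window_span lo hi :
  covers (d * r) r (COR_window d) lo hi -> (Z.of_nat r - 1 <= hi - lo)%Z.
Proof.
move=> cov; apply/Z.nlt_ge => short.
have lt_dr : d * ringpos r (hi + 1) < d * r by rewrite ltn_mul2l d_gt0 ringpos_lt.
have [p p_in] := cov (Ordinal lt_dr).
rewrite /COR_window /= mulKn // => /eqP /(ringpos_eqP r_gt0) [s Hs].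
by apply: (@Z_no_multiple_between (hi + 1 - p) s (Z.of_nat r)); lia.
Qed.

Lemma COR_ring_plan (x y : 'I_r) : exists2 Y, y = ringpos r Y :> nat &
  (excursion (Z.of_nat r - 1) (Z.abs (Y - Z.of_nat x)) <= Z.of_nat M)%Z.
Proof.
have := ringpos_lt r_gt0 (Z.of_nat y - Z.of_nat x).
have := ringpos_diff r_gt0 x y; set t := ringpos r _ => lift t_lt.
have [s s_t] : exists s, [\/ t = 0 /\ s = 1%Z, 0 < t <= r./2 /\ s = (-1)%Z | r./2 < t /\ s = 0%Z].
  by case: (posnP t) => [|t_gt0]; [exists 1%Z | case: (leqP t r./2); [exists (-1)%Z | exists 0%Z]];
     [constructor 1 | constructor 2 | constructor 3].
exists (Z.of_nat x + Z.of_nat t + s * Z.of_nat r)%Z; first by rewrite lift.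
by rewrite /excursion; case: (Z.leb_spec _ _); case: s_t => -[? ->]; lia.
Qed.

Lemma dist_COR_le u v : dist G u v <= d * r + M.
Proof.
have [Y ey plan] := COR_ring_plan u.2 v.2.
have := dist_cube_rings_ub r_gt0 (u := u) (c := (Z.of_nat r - 1)%Z)
  ltac:(lia) (@COR_window_covers) ey.
by move: (excursion _ _) plan => E; lia.
Qed.

Lemma dist_COR_ge (y : 'I_r) D :
  D <= (d * r).+1 * r ->
  (forall Y, y = ringpos r Y :> nat ->
     (Z.of_nat D <= Z.of_nat (d * r) + excursion (Z.of_nat r - 1) (Z.abs Y))%Z) ->
  D <= dist G (vzero (d * r), Ordinal r_gt0) (vone (d * r), y).
Proof.
move=> D_le le_D; apply: (dist_cube_rings_lb r_gt0 (c := (Z.of_nat r - 1)%Z)).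
- exact: COR_window_span.
- exact: leq_trans D_le (card_cube_rings_states _ _).
- by move=> Y /le_D; rewrite /= Z.sub_0_r.
Qed.

Lemma diam_COR_cube_rings : diam G = d * r + M.
Proof.
apply/eqP; rewrite eqn_leq (diam_le dist_COR_le) /=.
have half_lt : r./2 < r by lia.
case: (eqVneq r 3) => [r3 | r_ne3]; apply: leq_trans _ (dist_le_diam _ _ _).
  apply: (@dist_COR_ge (Ordinal r_gt0)); first by nia.
  move=> Y /(ringpos_lift_cases (y := 0) r_gt0 r_gt0) lift.
  have := excursion_ge_max (c := (Z.of_nat r - 1)%Z) (D := Z.abs Y).
  by case: lift => [->|->|?|?]; lia.
apply: (@dist_COR_ge (Ordinal half_lt)); first by nia.
move=> Y /(ringpos_lift_cases (y := r./2) r_gt0 half_lt) lift.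
have := excursion_ge_max (c := (Z.of_nat r - 1)%Z) (D := Z.abs Y).
by case: lift => [->|->|?|?]; lia.
Qed.

Lemma diam_CORadj : diam (CORadj d r) = d * r + M.
Proof. by rewrite (diam_CORadj_cube_rings d_gt0 r_gt1) diam_COR_cube_rings. Qed.

End CubeOfRingsDiameter.

Theorem mainTheorem10 :
  (forall n d : nat, 2 <= d -> d <= n -> 3 <= n ->
     diam (Qadj n d n) = n + maxn n./2 (2 * ((n + d.-1) %/ d) - 2)) /\
  (forall d r : nat, 1 <= d -> 3 <= r ->
     diam (CORadj d r) =
       (if r == 3 then (d + 1) * r else (d + 1) * r + r./2 - 2)).
Proof.
split=> [n d d_ge2 _ n_ge3 | d r d_gt0 r_ge3]; first exact: diam_Qadj.
by rewrite (diam_CORadj d_gt0 r_ge3); case: eqP => [-> | r_ne3]; lia.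
Qed.
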